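(* Let $P$ be a defining matrix as in the context. Then $\gcd(M(P))=\gcd(M'(P))$.
   Context: Fix integers $r\ge1$, $n_0,\dots,n_r\ge1$, vectors $l_i=(l_{i1},\dots,l_{in_i})\in\mathbb{Z}_{\ge1}^{n_i}$, $d_i\in\mathbb{Z}^{n_i}$ with $\gcd(l_{ij},d_{ij})=1$ and $d_{i1}/l_{i1}>\dots>d_{in_i}/l_{in_i}$. With $e_1,\dots,e_{r+1}$ the standard basis of $\mathbb{Z}^{r+1}$, $u=e_{r+1}$, $e_0=-(e_1+\dots+e_r)$, let $v_{ij}=l_{ij}e_i+d_{ij}u$. $P$ is the integral matrix with columns $v_{ij}$ ($0\le i\le r$, $1\le j\le n_i$) in type (ee), these together with $u$ in type (pe), with $-u$ in type (ep), with $u$ and $-u$ in type (pp); $P$ is a defining matrix if its columns generate $\mathbb{Q}^{r+1}$ as a convex cone. $M(P)$ is the set of absolute values of all $(r+1)\times(r+1)$ minors of $P$ (formed from sets of $r+1$ distinct columns). Set $\mu(j_0,\dots,j_r)=\sum_{i_0=0}^rd_{i_0j_{i_0}}\prod_{i\ne i_0}l_{ij_i}$, $\hat\mu=\mu(n_0,\dots,n_r)$, $\hat\nu(i,j)=l_{ij}d_{in_i}-l_{in_i}d_{ij}$. In type (ee), $M'(P)=\{|\hat\mu|\}\cup\{|\hat\nu(i_0,j_{i_0})|\prod_{i\ne i_0,i_1}l_{ij_i}\ ;\ 0\le i_0,i_1\le r,\ i_0\ne i_1,\ 1\le j_i\le n_i\text{ for all }i\ne i_1\}$; in types (pe),(ep),(pp),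 $M'(P)=\{\prod_{i\ne i_1}l_{ij_i}\ ;\ 0\le i_1\le r,\ 1\le j_i\le n_i\text{ for all }i\ne i_1\}$. *)

From mathcomp Require Import all_boot all_order all_algebra.
Unset Printing Implicit Defensive.
Import Order.TTheory GRing.Theory Num.Theory.
Local Open Scope ring_scope.

Inductive ptype := EE | PE | EP | PP.

(* Coordinates in Z^{r+1}: coordinate k (0 <= k <= r) is the coefficient of
   e_{k+1}; so u = e_{r+1} is coordinate r, e_i (1 <= i <= r) is coordinate
   i-1, and e_0 = -(e_1 + ... + e_r). Indices j are 1-based, as in the paper:
   l i j, d i j for 0 <= i <= r, 1 <= j <= n i. *)
Definition ecoord (r i k : nat) : int :=
  if i == 0%N then (if (k < r)%N then -1 else 0)
  else (if k == i.-1 then 1 else 0).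

Definition ucol (r : nat) : 'I_r.+1 -> int :=
  fun k => if (k : nat) == r then 1 else 0.

Definition vcol (r : nat) (l d : nat -> nat -> int) (i j : nat) : 'I_r.+1 -> int :=
  fun k => l i j * ecoord r i k + ucol r k * d i j.

Definition cols (r : nat) (n : nat -> nat) (l d : nat -> nat -> int) (t : ptype)
  : seq ('I_r.+1 -> int) :=
  [seq vcol r l d i j | i <- iota 0 r.+1, j <- iota 1 (n i)] ++
  match t with
  | EE => [::]
  | PE => [:: ucol r]
  | EP => [:: fun k => - ucol r k]
  | PP => [:: ucol r; fun k => - ucol r k]
  end.

Definition ncols r n l d t := size (cols r n l d t).

Definition Pmat r n l d t : 'M[int]_(r.+1, ncols r n l d t) :=
  \matrix_(k, c) nth (fun _ => 0) (cols r n l d t) c k.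

Definition is_defining r n l d t : Prop :=
  forall x : 'I_r.+1 -> rat, exists a : 'I_(ncols r n l d t) -> rat,
    (forall c, 0 <= a c) /\
    forall k, x k = \sum_c a c * ((Pmat r n l d t) k c)%:~R.

Definition gcdl (s : seq nat) : nat := foldr gcdn 0%N s.

Definition Mset r n l d t : seq nat :=
  [seq absz (\det (colsub (fun i => f i) (Pmat r n l d t)))
    | f : {ffun 'I_r.+1 -> 'I_(ncols r n l d t)} <- enum {ffun 'I_r.+1 -> 'I_(ncols r n l d t)} & injectiveb (fun i => f i)].

Definition mu_hat r (n : nat -> nat) (l d : nat -> nat -> int) : int :=
  \sum_(i0 < r.+1) d i0 (n i0) * \prod_(i < r.+1 | i != i0) l i (n i).

Definition nu_hat (n : nat -> nat) (l d : nat -> nat -> int) (i j : nat) : int :=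
  l i j * d i (n i) - l i (n i) * d i j.

(* choices (j_i) with 1 <= j_i <= n_i for all i != i1 (j_{i1} is unused and
   fixed arbitrarily to 0, so each admissible family is listed exactly once). *)
Definition nmax r (n : nat -> nat) : nat := \max_(i < r.+1) n i.
Definition Jset r (n : nat -> nat) (i1 : 'I_r.+1)
  : seq {ffun 'I_r.+1 -> 'I_(nmax r n).+1} :=
  [seq J : {ffun 'I_r.+1 -> 'I_(nmax r n).+1} <- enum {ffun 'I_r.+1 -> 'I_(nmax r n).+1}
     | [forall i, if i == i1 then (J i == 0 :> nat)
                  else (1 <= J i <= n i)%N]].

Definition Mprime r n l d t : seq nat :=
  match t with
  | EE =>
    absz (mu_hat r n l d) ::
    flatten [seq [seq absz (nu_hat n l d p.1 (J p.1)
                        * \prod_(i < r.+1 | (i != p.1) && (i != p.2)) l i (J i))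
                 | J : {ffun 'I_r.+1 -> 'I_(nmax r n).+1} <- Jset r n p.2]
            | p : 'I_r.+1 * 'I_r.+1 <- [seq (i0, i1) | i0 <- enum 'I_r.+1, i1 <- enum 'I_r.+1]
              & p.1 != p.2]
  | _ =>
    flatten [seq [seq absz (\prod_(i < r.+1 | i != i1) l i (J i)) | J : {ffun 'I_r.+1 -> 'I_(nmax r n).+1} <- Jset r n i1]
            | i1 <- enum 'I_r.+1]
  end.

(* Every maximal minor of P is the determinant of a matrix whose column c is
   lam_c e_(a c) + del_c u.  Expanding along the u-coordinate gives
   sum_p del_p (prod_(c <> p) lam_c) eps_p, where eps_p = +-1 if a is a
   bijection away from p and eps_p = 0 otherwise.  For suitable choices of
   columns this yields +-mu_hat, +-nu_hat(i0, j) prod l_(i j_i) and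
   +-prod l_(i j_i) as minors, so gcd M(P) divides gcd M'(P).  Conversely, in
   types (pe), (ep), (pp) every nonzero term of the expansion is, after
   relabelling the columns, +- an element of M'(P).  In type (ee) the columns
   v_ij of a minor D are replaced one at a time by v_(i n_i): since
     l_(i n_i) v_ij = l_ij v_(i n_i) - nu_hat(i, j) u   and
     d_(i n_i) v_ij = d_ij v_(i n_i) + nu_hat(i, j) e_i,
   gcd M'(P) divides l_(i n_i) D and d_(i n_i) D as soon as it divides the
   minor obtained from D by the replacement, and l_(i n_i), d_(i n_i) are
   coprime.  Once all columns are of the form v_(i n_i) the minor is 0 or
   +-mu_hat. *)

From mathcomp Require Import all_boot all_order all_algebra.
From mathcomp Require Import ring fingroup perm.
Import Order.TTheory GRing.Theory Num.Theory.
Local Open Scope ring_scope.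

Lemma prod_neq_lift (R : comPzSemiRingType) m (p : 'I_m.+1) (F : 'I_m.+1 -> R) :
  \prod_(c < m.+1 | c != p) F c = \prod_(c < m) F (lift p c).
Proof.
rewrite big_mkcond (bigD1_ord p) //= eqxx mul1r.
by apply: eq_bigr => c _; rewrite eq_sym neq_lift.
Qed.

Lemma sum_delta (R : pzSemiRingType) (I : finType) (i0 : I) (F : I -> R) :
  \sum_i (i == i0)%:R * F i = F i0.
Proof.
by rewrite (bigD1 i0) //= eqxx mul1r big1 ?addr0 // => i /negbTE ->; rewrite mul0r.
Qed.

Lemma dvdn_gcdlP g s : reflect {in s, forall x, g %| x}%N (g %| gcdl s)%N.
Proof.
elim: s => [|x s IHs] /=; first by rewrite dvdn0; constructor.
rewrite dvdn_gcd; apply: (iffP andP) => [[gx /IHs gs] y | gxs].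
  by rewrite inE => /predU1P[-> | /gs].
split; first by apply: gxs; rewrite mem_head.
by apply/IHs => y ys; apply: gxs; rewrite inE ys orbT.
Qed.

Lemma dvdn_absz (g : nat) (x : int) : (g %| `|x|)%N = (g%:Z %| x)%Z.
Proof. by rewrite dvdzE. Qed.

Lemma dvdz_coprime_mul (g x y z : int) :
  coprimez x y -> (g %| x * z)%Z -> (g %| y * z)%Z -> (g %| z)%Z.
Proof.
move=> cop_xy gxz gyz.
have : (g %| gcdz (x * z) (y * z))%Z by rewrite dvdz_gcd gxz gyz.
by rewrite -mulz_gcdl (eqP cop_xy) mul1r !dvdzE.
Qed.
Arguments dvdz_coprime_mul {g x y z}.

Lemma perm_extend (T : finType) (a : T -> T) (p : T) :
  {in predC1 p &, injective a} -> exists s : {perm T}, {in predC1 p, s =1 a}.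
Proof.
move=> inj_a; set A := [set a c | c in predC1 p].
have [i1 i1_notin] : exists i1, i1 \notin A.
  apply/existsP; rewrite -[X in is_true X]negbK negb_exists; apply/negP => /forallP all_in.
  have cardA : #|A| = #|T|.-1 by rewrite card_in_imset // cardC1.
  have : #|A| = #|T| by apply: eq_card => x; rewrite inE; apply/negPn.
  have : (0 < #|T|)%N by apply/card_gt0P; exists p.
  by rewrite cardA; case: #|T| => // m _; apply: n_Sn.
pose b c := if c == p then i1 else a c.
have inj_b : injective b.
  move=> x y; rewrite /b.
  have imA c : c != p -> a c \in A by move=> ?; apply: imset_f.
  case: eqP => [-> | /eqP xp]; case: eqP => [-> // | /eqP yp].
  - by move=> e; case/negP: i1_notin; rewrite e imA.
  - by move=> e; case/negP: i1_notin; rewrite -e imA.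
  - exact: inj_a.
by exists (perm inj_b) => c /negbTE cp; rewrite permE /b cp.
Qed.
Arguments perm_extend {T a p}.

Section Relabel.

Variables (T : finType) (s : {perm T}) (a : T -> T) (p : T).
Hypothesis eq_sa : {in predC1 p, s =1 a}.

Lemma permV_neq k : ((s^-1)%g k != p) = (k != s p).
Proof. by rewrite -(inj_eq (@perm_inj _ s)) permKV. Qed.

Lemma relabelK k : k != s p -> a ((s^-1)%g k) = k.
Proof. by move=> kp; rewrite -eq_sa ?permKV // inE permV_neq. Qed.

Lemma prod_relabel (R : comPzSemiRingType) (I : Type) (P : pred T)
    (F : T -> I -> R) (j : T -> I) :
  \prod_(c | P (s c) && (c != p)) F (a c) (j c) =
  \prod_(k | P k && (k != s p)) F k (j ((s^-1)%g k)).
Proof.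
rewrite (reindex_inj (@perm_inj _ s^-1)%g) /=.
apply: eq_big => [k | k /andP[_ kp]]; first by rewrite permKV permV_neq.
by rewrite relabelK // -permV_neq.
Qed.

End Relabel.
Arguments relabelK {T s a p}.
Arguments prod_relabel {T s a p} eq_sa {R I} P F j.

(** * Minors with columns [lam c e_(a c) + del c u] *)

Section ColumnDeterminant.

Context {r : nat}.
Implicit Types (a : 'I_r.+1 -> 'I_r.+1) (lam del : 'I_r.+1 -> int) (p q : 'I_r.+1).

Definition emx a : 'M[int]_r.+1 := \matrix_(k, c) ecoord r (a c) k.

Definition vmx a lam del : 'M[int]_r.+1 :=
  \matrix_(k, c) (lam c * ecoord r (a c) k + ucol r k * del c).

Definition ecof a p : int := cofactor (emx a) ord_max p.

Lemma ecoord_max (i : 'I_r.+1) : ecoord r i r = 0.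
Proof.
rewrite /ecoord ltnn; case: i => [[|i] //= lt_i_r].
by rewrite gtn_eqF.
Qed.

Lemma cofactor_vmx a lam del p :
  cofactor (vmx a lam del) ord_max p = (\prod_(c | c != p) lam c) * ecof a p.
Proof.
rewrite /ecof /cofactor.
have -> : row' ord_max (col' p (vmx a lam del)) =
    (row' ord_max (col' p (emx a)) : 'M_r) *m diag_mx (\row_c lam (lift p c)).
  apply/matrixP => k c; rewrite mul_mx_diag !mxE /ucol.
  by rewrite lift_max /= ltn_eqF //= mul0r addr0 mulrC.
rewrite det_mulmx det_diag prod_neq_lift.
under eq_bigr do rewrite mxE.
ring.
Qed.

Lemma det_vmx a lam del :
  \det (vmx a lam del) = \sum_p del p * (\prod_(c | c != p) lam c) * ecof a p.
Proof.
rewrite (expand_det_row _ ord_max); apply: eq_bigr => p _.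
by rewrite cofactor_vmx mxE ecoord_max /ucol eqxx mulr0 add0r mul1r mulrA.
Qed.

Lemma det_vmx_eqcol a lam del c1 c2 : c1 != c2 ->
  a c1 = a c2 -> lam c1 = lam c2 -> del c1 = del c2 -> \det (vmx a lam del) = 0.
Proof.
move=> c12 ea el ed; rewrite -det_tr (determinant_alternate c12) // => k.
by rewrite !mxE ea el ed.
Qed.

Lemma ecof_neq0_inj a p : ecof a p != 0 -> {in predC1 p &, injective a}.
Proof.
move=> ecof_a c1 c2 /[!inE] c1p c2p ea; apply/eqP; apply: contraNT ecof_a => c12.
move: c1p c2p; rewrite ![_ == p]eq_sym.
move=> /unlift_some[c1' def_c1 _] /unlift_some[c2' def_c2 _].
have c12' : c1' != c2' by apply: contraNneq c12 => e; rewrite def_c1 def_c2 e.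
rewrite /ecof /cofactor -det_tr (determinant_alternate c12') ?mulr0 // => k.
by rewrite !mxE -def_c1 -def_c2 ea.
Qed.

Lemma ecof_ext a a' p : {in predC1 p, a =1 a'} -> ecof a p = ecof a' p.
Proof.
move=> eq_a; rewrite /ecof /cofactor; congr (_ * \det _); apply/matrixP => k c.
by rewrite !mxE eq_a // inE eq_sym neq_lift.
Qed.

Lemma ecof_eqcol a p q : p != q -> a p = a q -> ecof a p = - ecof a q.
Proof.
move=> pq ea; apply/eqP; rewrite -addr_eq0; apply/eqP.
pose del c : int := (c == p)%:R + (c == q)%:R.
rewrite -(@det_vmx_eqcol a (fun=> 1) del p q pq ea) //; last first.
  by rewrite /del eqxx (negbTE pq) eq_sym (negbTE pq) eqxx addrC.
rewrite det_vmx; under eq_bigr do rewrite big1 // mulr1 mulrDl.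
by rewrite big_split /= !sum_delta.
Qed.

Lemma sum_ecoord (k : 'I_r.+1) : \sum_(i < r.+1) ecoord r i k = 0.
Proof.
rewrite big_ord_recl /= (eq_bigr (fun i : 'I_r => if i == k :> nat then 1 else 0)).
  by rewrite -big_mkcond /= (big_ord1_eq _ (fun=> 1)) /ecoord /=; case: ifP; rewrite ?addNr.
by move=> i _; rewrite /ecoord /= eq_sym.
Qed.

Lemma ecof_inj_const a p q : injective a -> ecof a p = ecof a q.
Proof.
move=> inj_a; apply/eqP; rewrite -subr_eq0; apply/eqP.
pose del c : int := (c == p)%:R - (c == q)%:R.
have <- : \det (vmx a (fun=> 1) del) = ecof a p - ecof a q.
  rewrite det_vmx; under eq_bigr do rewrite big1 // mulr1 mulrBl.
  by rewrite sumrB !sum_delta.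
rewrite -det_tr; apply/eqP/det0P; exists (const_mx 1).
  by apply/eqP => /matrixP/(_ 0 0); rewrite !mxE.
apply/matrixP => ? k; rewrite !mxE.
under eq_bigr do rewrite !mxE !mul1r.
rewrite big_split /=.
have -> : \sum_c ecoord r (a c) k = \sum_(i < r.+1) ecoord r i k.
  by rewrite [RHS](reindex_inj inj_a).
rewrite sum_ecoord add0r.
under eq_bigr do rewrite mulrC mulrBl.
by rewrite sumrB !sum_delta subrr.
Qed.

Lemma ecof_id p : ecof id p = (-1) ^+ r.
Proof.
rewrite (@ecof_inj_const _ p ord0) // /ecof /cofactor addn0.
have -> : row' ord_max (col' ord0 (emx id)) = 1%:M.
  apply/matrixP => k c; rewrite !mxE /ecoord lift0 lift_max /=.
  by rewrite -val_eqE /=; case: eqP.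
by rewrite det1 mulr1.
Qed.

Lemma det_vmx_inj a lam del : injective a ->
  \det (vmx a lam del) = ecof a ord0 * \sum_p del p * \prod_(c | c != p) lam c.
Proof.
move=> inj_a; rewrite det_vmx mulr_sumr; apply: eq_bigr => p _.
by rewrite (ecof_inj_const a p ord0 inj_a) mulrC.
Qed.

Lemma det_vmx_lam0 a lam del p : lam p = 0 ->
  \det (vmx a lam del) = del p * (\prod_(c | c != p) lam c) * ecof a p.
Proof.
move=> lam_p; rewrite det_vmx (bigD1 p) //= [X in _ + X]big1 ?addr0 // => q qp.
by rewrite (bigD1 p) 1?eq_sym //= lam_p mul0r mulr0 mul0r.
Qed.

Lemma det_vmx_twin a lam del p q : p != q -> a p = a q ->
  \det (vmx a lam del) =
  ecof a q * (del q * \prod_(c | c != q) lam c - del p * \prod_(c | c != p) lam c).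
Proof.
move=> pq apq; rewrite det_vmx (bigD1 q) //= [X in _ + X](bigD1 p) //=.
rewrite [X in _ + (_ + X)]big1 ?addr0.
  by rewrite (ecof_eqcol _ _ _ pq apq); ring.
move=> c /andP[cq cp]; have [-> | /ecof_neq0_inj inj_a] := eqVneq (ecof a c) 0.
  by rewrite mulr0.
by move/negP: pq; case; apply/eqP/inj_a; rewrite ?inE 1?eq_sym.
Qed.

Definition ucoef a lam q : int := (\prod_(c | c != q) lam c) * ecof a q.

Definition ecoef a lam del q : int :=
  \sum_(p | p != q) del p * (\prod_(c | (c != q) && (c != p)) lam c) * ecof a p.

Lemma det_vmx_col a lam del q :
  \det (vmx a lam del) = del q * ucoef a lam q + lam q * ecoef a lam del q.
Proof.
rewrite det_vmx /ucoef /ecoef (bigD1 q) //= mulrA; congr (_ + _).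
rewrite mulr_sumr; apply: eq_bigr => p pq.
rewrite (bigD1 q (P := fun c => c != p)) 1?eq_sym //=.
rewrite (eq_bigl (fun c => (c != q) && (c != p))) => [|c]; last exact: andbC.
ring.
Qed.

Lemma ucoef_ext a lam lam' q :
  {in predC1 q, lam =1 lam'} -> ucoef a lam q = ucoef a lam' q.
Proof. by move=> eq_lam; congr (_ * _); apply: eq_bigr => c cq; apply: eq_lam. Qed.

Lemma ecoef_ext a lam del lam' del' q :
  {in predC1 q, lam =1 lam'} -> {in predC1 q, del =1 del'} ->
  ecoef a lam del q = ecoef a lam' del' q.
Proof.
move=> eq_lam eq_del; apply: eq_bigr => p pq; rewrite eq_del //.
by congr (_ * _ * _); apply: eq_bigr => c /andP[cq _]; apply: eq_lam.
Qed.

End ColumnDeterminant.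
Arguments det_vmx_eqcol {r a lam del c1 c2}.

(** * Divisibility of these minors by the elements of M'(P) *)

Definition admissible r (n : nat -> nat) (i1 : 'I_r.+1) (J : 'I_r.+1 -> nat) :=
  forall i, i != i1 -> (1 <= J i <= n i)%N.

Definition vmx_of r (l d : nat -> nat -> int) (a : 'I_r.+1 -> 'I_r.+1)
    (j : 'I_r.+1 -> nat) :=
  vmx a (fun c => l (a c) (j c)) (fun c => d (a c) (j c)).
Arguments vmx_of {r}.

Lemma sum_mu_hat r (n : nat -> nat) (l d : nat -> nat -> int) (a : 'I_r.+1 -> 'I_r.+1) :
  injective a ->
  \sum_p d (a p) (n (a p)) * \prod_(c | c != p) l (a c) (n (a c)) = mu_hat r n l d.
Proof.
move=> inj_a; rewrite /mu_hat [RHS](reindex_inj inj_a); apply: eq_bigr => p _.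
congr (_ * _); rewrite [RHS](reindex_inj inj_a) /=.
by apply: eq_bigl => c; rewrite inj_eq.
Qed.

Lemma det_vmx_of_last r (n : nat -> nat) (l d : nat -> nat -> int) :
  \det (vmx_of l d id (fun c : 'I_r.+1 => n c)) = (-1) ^+ r * mu_hat r n l d.
Proof. by rewrite /vmx_of det_vmx_inj // ecof_id. Qed.

Lemma det_vmx_of_nu r (n : nat -> nat) (l d : nat -> nat -> int) (i0 i1 : 'I_r.+1) J :
  i0 != i1 ->
  \det (vmx_of l d (fun c => if c == i1 then i0 else c)
                   (fun c => if c == i1 then n i0 else J c)) =
  (-1) ^+ r * (nu_hat n l d i0 (J i0) * \prod_(i | (i != i0) && (i != i1)) l i (J i)).
Proof.
move=> i01; rewrite /vmx_of (det_vmx_twin _ _ _ _ _ i01) /=; last first.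
  by rewrite eqxx (negbTE i01).
rewrite (@ecof_ext _ _ id) ?ecof_id; last by move=> c /[!inE] /negbTE->.
set P := \prod_(i | (i != i0) && (i != i1)) l i (J i).
rewrite [X in _ * (_ - _ * X)](bigD1 i1) 1?eq_sym //= (bigD1 i0) //= !eqxx (negbTE i01).
rewrite (eq_bigr (fun i : 'I_r.+1 => l i (J i))) => [|c /andP[/negbTE-> _] //].
rewrite [X in _ * (_ - _ * (_ * X))](eq_bigr (fun i : 'I_r.+1 => l i (J i))); last first.
  by move=> c /andP[_ /negbTE->].
rewrite (eq_bigl (fun c => (c != i0) && (c != i1)) _ (fun c => andbC _ _)) -/P /nu_hat.
by rewrite [i1 == i0]eq_sym (negbTE i01); ring.
Qed.

Section TypeWithU.

Context {r : nat} {n : nat -> nat} {l : nat -> nat -> int} {g : int}.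
Hypothesis g_dvd_prod :
  forall i1 J, admissible r n i1 J -> (g %| \prod_(i | i != i1) l i (J i))%Z.

Lemma dvd_det_vmx_mixed (a : 'I_r.+1 -> 'I_r.+1) (lam del : 'I_r.+1 -> int)
    (j : 'I_r.+1 -> nat) :
  (forall c, lam c = 0 \/ lam c = l (a c) (j c) /\ (1 <= j c <= n (a c))%N) ->
  (g %| \det (vmx a lam del))%Z.
Proof.
move=> lamP; rewrite det_vmx; apply: rpred_sum => p _.
have [-> | /ecof_neq0_inj inj_a] := eqVneq (ecof a p) 0; first by rewrite mulr0 dvdz0.
apply/dvdz_mulr/dvdz_mull.
have [/existsP[c /andP[cp /eqP lam0]] | lam_v] := boolP [exists c, (c != p) && (lam c == 0)].
  by rewrite (bigD1 c) //= lam0 mul0r dvdz0.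
have {}lam_v c : c != p -> lam c = l (a c) (j c) /\ (1 <= j c <= n (a c))%N.
  move=> cp; case: (lamP c) => // lam0.
  by case/existsP: lam_v; exists c; rewrite cp lam0 eqxx.
have [s eq_sa] := perm_extend inj_a.
rewrite (eq_bigr (fun c => l (a c) (j c))) => [|c /lam_v[] //].
rewrite (prod_relabel eq_sa predT l j); apply: g_dvd_prod => k kp.
have kp' : (s^-1)%g k != p by rewrite permV_neq.
by have [_] := lam_v _ kp'; rewrite (relabelK eq_sa).
Qed.
End TypeWithU.

Section TypeEE.

Context {r : nat} {n : nat -> nat} {l d : nat -> nat -> int} {g : int}.
Implicit Types (a : 'I_r.+1 -> 'I_r.+1) (j : 'I_r.+1 -> nat).
Hypothesis r_gt0 : (1 <= r)%N.
Hypothesis n_gt0 : forall i, (i <= r)%N -> (1 <= n i)%N.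
Hypothesis coprime_ld :
  forall i j : nat, (i <= r)%N -> (1 <= j <= n i)%N -> coprimez (l i j) (d i j).
Hypothesis g_dvd_mu : (g %| mu_hat r n l d)%Z.
Hypothesis g_dvd_nu : forall (i0 i1 : 'I_r.+1) J, i0 != i1 -> admissible r n i1 J ->
  (g %| nu_hat n l d i0 (J i0) * \prod_(i | (i != i0) && (i != i1)) l i (J i))%Z.

Let last_ok (i : 'I_r.+1) : (1 <= n i <= n i)%N.
Proof. by rewrite leqnn andbT n_gt0 // -ltnS. Qed.

Lemma dvd_nu_prod (i i1 : 'I_r.+1) (j' : nat) J :
  (1 <= j' <= n i)%N -> admissible r n i1 J ->
  (g %| nu_hat n l d i j' * \prod_(k | k != i1) l k (J k))%Z.
Proof.
move=> j'_ok J_ok; pose J' k := if k == i then j' else J k.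
have nu_J' k0 : k0 != i -> admissible r n k0 J' ->
    (g %| nu_hat n l d i j' * \prod_(k | (k != i) && (k != k0)) l k (J k))%Z.
  move=> k0i J'_ok; have ik0 : i != k0 by rewrite eq_sym.
  have := g_dvd_nu _ _ _ ik0 J'_ok; rewrite /J' eqxx.
  by rewrite (eq_bigr (fun k : 'I_r.+1 => l k (J k))) // => k /andP[/negbTE-> _].
have [i1i | i1i] := eqVneq i1 i.
  have [k0 k0i] : exists k0 : 'I_r.+1, k0 != i.
    have [-> | i0] := eqVneq i ord0; last by exists ord0; rewrite eq_sym.
    by exists ord_max; rewrite -val_eqE /= -lt0n.
  rewrite i1i (bigD1 k0) //= mulrCA; apply/dvdz_mull/nu_J' => // k _.
  by rewrite /J'; case: eqP => [-> // | /eqP ki]; apply: J_ok; rewrite i1i.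
rewrite (bigD1 i) 1?eq_sym //= mulrCA; apply: dvdz_mull.
rewrite (eq_bigl (fun k => (k != i) && (k != i1))) => [|k]; last exact: andbC.
apply: (nu_J' _ i1i) => k ki1.
by rewrite /J'; case: eqP => [-> // | _]; apply: J_ok.
Qed.

Section Columns.

Variables (a : 'I_r.+1 -> 'I_r.+1) (j : 'I_r.+1 -> nat).
Hypothesis j_ok : forall c, (1 <= j c <= n (a c))%N.

Let lam c := l (a c) (j c).
Let del c := d (a c) (j c).

Lemma dvd_nu_ucoef q : (g %| nu_hat n l d (a q) (j q) * ucoef a lam q)%Z.
Proof.
rewrite /ucoef; have [-> | /ecof_neq0_inj inj_a] := eqVneq (ecof a q) 0.
  by rewrite !mulr0 dvdz0.
have [s eq_sa] := perm_extend inj_a.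
rewrite /lam (prod_relabel eq_sa predT (fun k : 'I_r.+1 => l k) j) mulrA.
apply/dvdz_mulr/dvd_nu_prod => // k kq.
by have := j_ok ((s^-1)%g k); rewrite (relabelK eq_sa).
Qed.

Lemma dvd_nu_ecoef q : (g %| nu_hat n l d (a q) (j q) * ecoef a lam del q)%Z.
Proof.
rewrite /ecoef mulr_sumr; apply: rpred_sum => p pq.
have [-> | /ecof_neq0_inj inj_a] := eqVneq (ecof a p) 0; first by rewrite !mulr0 dvdz0.
have [s eq_sa] := perm_extend inj_a.
have sq : s q = a q by apply: eq_sa; rewrite inE eq_sym.
rewrite (eq_bigl (fun c => (s c != a q) && (c != p))) => [|c]; last first.
  by rewrite -sq (inj_eq perm_inj).
rewrite /lam (prod_relabel eq_sa (fun k => k != a q) (fun k : 'I_r.+1 => l k) j).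
have -> : forall nu x y z : int, nu * (x * y * z) = x * z * (nu * y) by move=> *; ring.
apply: dvdz_mull; have <- : j ((s^-1)%g (a q)) = j q by rewrite -sq permK.
apply: g_dvd_nu; first by rewrite -sq (inj_eq perm_inj) eq_sym.
by move=> k kp; have := j_ok ((s^-1)%g k); rewrite (relabelK eq_sa).
Qed.

Lemma dvd_det_vmx_of_step q :
  (g %| \det (vmx_of l d a (fun c => if c == q then n (a q) else j c)))%Z ->
  (g %| \det (vmx_of l d a j))%Z.
Proof.
move=> dvd_F'.
have F'_col : \det (vmx_of l d a (fun c => if c == q then n (a q) else j c)) =
    d (a q) (n (a q)) * ucoef a lam q + l (a q) (n (a q)) * ecoef a lam del q.
  rewrite (det_vmx_col _ _ _ q) /= eqxx.
  by congr (_ * _ + _ * _); [apply: ucoef_ext | apply: ecoef_ext] => c /[!inE] /negbTE->.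
move: (\det _) dvd_F' F'_col => F' dvd_F' F'_col.
have F_col := det_vmx_col a lam del q.
have dvd_U := dvd_nu_ucoef q; have dvd_E := dvd_nu_ecoef q.
have coprime_n : coprimez (l (a q) (n (a q))) (d (a q) (n (a q))).
  by apply: coprime_ld; [rewrite -ltnS | exact: last_ok].
apply: (dvdz_coprime_mul coprime_n).
- have -> : l (a q) (n (a q)) * \det (vmx a lam del) =
      l (a q) (j q) * F' - nu_hat n l d (a q) (j q) * ucoef a lam q.
    by rewrite F_col F'_col /nu_hat; ring.
  by apply: rpredB => //; apply: dvdz_mull.
- have -> : d (a q) (n (a q)) * \det (vmx a lam del) =
      d (a q) (j q) * F' + nu_hat n l d (a q) (j q) * ecoef a lam del q.
    by rewrite F_col F'_col /nu_hat; ring.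
  by apply: rpredD => //; apply: dvdz_mull.
Qed.

End Columns.
Arguments dvd_det_vmx_of_step {a j}.

Lemma dvd_det_vmx_of_last a : (g %| \det (vmx_of l d a (fun c => n (a c))))%Z.
Proof.
have [/injectiveP inj_a | /injectivePn[c1 [c2 c12 ea]]] := boolP (injectiveb a).
  by rewrite det_vmx_inj // (sum_mu_hat r n l d a inj_a) dvdz_mull.
by rewrite (det_vmx_eqcol c12 ea) ?ea.
Qed.

Lemma dvd_det_vmx_of a j : (forall c, 1 <= j c <= n (a c))%N ->
  (g %| \det (vmx_of l d a j))%Z.
Proof.
suff dvd_F m j' : (forall c, 1 <= j' c <= n (a c))%N ->
    (forall c : 'I_r.+1, m <= c -> j' c = n (a c))%N -> (g %| \det (vmx_of l d a j'))%Z.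
  by move=> j_ok; apply: (dvd_F r.+1) => // c; rewrite leqNgt ltn_ord.
elim: m j' => [|m IHm] {}j j_ok j_top.
  have -> : vmx_of l d a j = vmx_of l d a (fun c => n (a c)).
    by apply/matrixP => k c; rewrite !mxE j_top.
  exact: dvd_det_vmx_of_last.
have [m_lt | m_ge] := ltnP m r.+1; last first.
  apply: IHm => // c mc; have := leq_trans (ltn_ord c) (leq_trans m_ge mc).
  by rewrite ltnn.
pose q := Ordinal m_lt; apply: (dvd_det_vmx_of_step j_ok q); apply: IHm => c.
  by case: eqP => [-> | _].
case: eqP => [-> // | /eqP cq] mc; apply: j_top.
by rewrite ltn_neqAle mc andbT; apply: contraNneq cq => mc'; apply/eqP/val_inj.
Qed.

End TypeEE.

(** * The columns of P and the sets M(P), M'(P) *)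

Section ColumnTags.

Variables (r : nat) (n : nat -> nat) (l d : nat -> nat -> int) (t : ptype).

(* Columns are functions, which have no decidable equality, so they are indexed
   by tags: [inl (i, j)] stands for v_ij and [inr b] for u or -u. *)
Local Notation ctag := ('I_r.+1 * nat + bool)%type.

Definition col_of (x : ctag) : 'I_r.+1 -> int :=
  match x with
  | inl (i, j) => vcol r l d i j
  | inr true => ucol r
  | inr false => fun k => - ucol r k
  end.

Definition col_tags : seq ctag :=
  [seq inl (i, j) | i : 'I_r.+1 <- enum 'I_r.+1, j <- iota 1 (n i)] ++
  match t with
  | EE => [::]
  | PE => [:: inr true]
  | EP => [:: inr false]
  | PP => [:: inr true; inr false]
  end.

Lemma cols_tagsE : cols r n l d t = map col_of col_tags.
Proof. by rewrite /cols map_cat map_allpairs -val_enum_ord allpairs_mapl; case: t. Qed.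

Lemma mem_col_tags_v i j : (inl (i, j) \in col_tags) = (1 <= j <= n i)%N.
Proof.
rewrite mem_cat [X in _ || X](_ : _ = false) ?orbF; last by case: t.
apply/allpairsPdep/idP => [[i' [j' [_ j'_in [-> ->]]]] | j_ok].
  by rewrite mem_iota add1n ltnS in j'_in.
by exists i, j; rewrite mem_enum mem_iota add1n ltnS.
Qed.

Lemma mem_col_tags_u b : inr b \in col_tags -> t <> EE.
Proof.
rewrite /col_tags; case: t => //.
by rewrite cats0 => /allpairsPdep[? [? [_ _ /eqP]]].
Qed.

Lemma col_tag_u : t <> EE -> exists b, inr b \in col_tags.
Proof.
rewrite /col_tags; case: t => // _; [exists true | exists false | exists true];
  by rewrite mem_cat mem_head orbT.
Qed.

Definition tagmx (T : 'I_r.+1 -> ctag) : 'M[int]_r.+1 := \matrix_(k, c) col_of (T c) k.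

(* [tag_a (inr b)] is arbitrary: that column has no e-component. *)
Definition tag_a (x : ctag) : 'I_r.+1 := if x is inl (i, _) then i else ord0.
Definition tag_j (x : ctag) : nat := if x is inl (_, j) then j else 0.
Definition tag_l (x : ctag) : int := if x is inl (i, j) then l i j else 0.
Definition tag_d (x : ctag) : int :=
  match x with inl (i, j) => d i j | inr b => if b then 1 else -1 end.

Lemma tagmx_vmx T :
  tagmx T = vmx (fun c => tag_a (T c)) (fun c => tag_l (T c)) (fun c => tag_d (T c)).
Proof.
apply/matrixP => k c; rewrite !mxE.
by case: (T c) => [[i j] | []] //=; rewrite mul0r add0r ?mulr1 ?mulrN1.
Qed.

Lemma tagmx_v (a : 'I_r.+1 -> 'I_r.+1) (j : 'I_r.+1 -> nat) :
  tagmx (fun c => inl (a c, j c)) = vmx_of l d a j.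
Proof. by rewrite tagmx_vmx. Qed.

Lemma colsub_Pmat (f : 'I_r.+1 -> 'I_(ncols r n l d t)) T :
  (forall c, nth (inr true) col_tags (f c) = T c) ->
  colsub f (Pmat r n l d t) = tagmx T.
Proof.
move=> fT; apply/matrixP => k c; rewrite !mxE cols_tagsE (nth_map (inr true)) ?fT //.
by rewrite -(size_map col_of) -cols_tagsE.
Qed.

Lemma Mset_dvdP g : (g %| gcdl (Mset r n l d t))%N <->
  (forall T, (forall c, T c \in col_tags) -> (g %| `|\det (tagmx T)|)%N).
Proof.
split=> [/dvdn_gcdlP gM T T_in | gT]; last first.
  apply/dvdn_gcdlP => _ /mapP[f _ ->].
  rewrite (colsub_Pmat _ (fun c => nth (inr true) col_tags (f c))) //; apply: gT => c.
  by rewrite mem_nth // -(size_map col_of) -cols_tagsE.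
have idx_lt c : (index (T c) col_tags < ncols r n l d t)%N.
  by rewrite /ncols cols_tagsE size_map index_mem.
pose f c := Ordinal (idx_lt c).
have fT c : nth (inr true) col_tags (f c) = T c by rewrite nth_index.
rewrite -(colsub_Pmat _ _ fT).
have [/injectiveP inj_f | /injectivePn[c1 [c2 c12 fc]]] := boolP (injectiveb f); last first.
  by rewrite -det_tr (determinant_alternate c12) ?dvdn0 // => k; rewrite !mxE fc.
apply: gM; apply/mapP; exists [ffun c => f c].
  by rewrite mem_filter mem_enum andbT; apply/injectiveP => x y; rewrite !ffunE => /inj_f.
by congr (absz (\det _)); apply/matrixP => k c; rewrite !mxE ffunE.
Qed.

End ColumnTags.
Arguments col_tag_u r n {t}.
Arguments mem_col_tags_u {r n t b}.

Lemma Jset_admissible r n i1 (J : {ffun 'I_r.+1 -> 'I_(nmax r n).+1}) :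
  J \in Jset r n i1 -> admissible r n i1 (fun i => J i).
Proof.
rewrite mem_filter => /andP[/forallP J_ok _] i /negbTE i1i.
by have := J_ok i; rewrite i1i.
Qed.

Lemma admissible_Jset r n i1 J : admissible r n i1 J ->
  exists2 J' : {ffun 'I_r.+1 -> 'I_(nmax r n).+1},
    J' \in Jset r n i1 & {in predC1 i1, forall i, J' i = J i :> nat}.
Proof.
move=> J_ok; have J_lt i : i != i1 -> (J i < (nmax r n).+1)%N.
  by move=> i1i; rewrite ltnS (leq_trans _ (leq_bigmax i)) //; case/andP: (J_ok i i1i).
exists [ffun i => if i == i1 then ord0 else inord (J i)].
  rewrite mem_filter mem_enum andbT; apply/forallP => i; rewrite ffunE.
  by case: eqP => [// | /eqP i1i]; rewrite inordK ?J_lt ?J_ok.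
by move=> i /[!inE] i1i; rewrite ffunE (negbTE i1i) inordK ?J_lt.
Qed.

Lemma Mprime_u r n l d t : t <> EE -> Mprime r n l d t = Mprime r n l d PE.
Proof. by case: t. Qed.

Lemma Mprime_dvdP_u r n l d t g : t <> EE ->
  (g %| gcdl (Mprime r n l d t))%N <->
  (forall i1 J, admissible r n i1 J -> (g %| `|(\prod_(i | i != i1) l i (J i))%R|)%N).
Proof.
move=> /Mprime_u->; split=> [/dvdn_gcdlP gM i1 J /admissible_Jset[J' J'_in eqJ] | gP].
  rewrite (eq_bigr (fun i : 'I_r.+1 => l i (J' i))) => [|i i1i]; last by rewrite eqJ.
  apply: gM; apply/flatten_mapP; exists i1; rewrite ?mem_enum //.
  by apply/mapP; exists J'.
apply/dvdn_gcdlP => _ /flatten_mapP[i1 _ /mapP[J J_in ->]].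
exact/gP/Jset_admissible.
Qed.

Lemma Mprime_dvdP_EE r n l d g :
  (g %| gcdl (Mprime r n l d EE))%N <->
  (g %| `|mu_hat r n l d|)%N /\
  (forall i0 i1 J, i0 != i1 -> admissible r n i1 J ->
     (g %| `|(nu_hat n l d i0 (J i0) * \prod_(i | (i != i0) && (i != i1)) l i (J i))%R|)%N).
Proof.
rewrite /= dvdn_gcd; split=> [/andP[g_mu /dvdn_gcdlP gM] | [g_mu gP]].
  split=> // i0 i1 J i01 /admissible_Jset[J' J'_in eqJ].
  have -> : J i0 = J' i0 by rewrite eqJ // inE.
  rewrite (eq_bigr (fun i : 'I_r.+1 => l i (J' i))) => [|i /andP[_ i1i]]; last first.
    by rewrite eqJ.
  apply: gM; apply/flatten_mapP; exists (i0, i1).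
    by rewrite mem_filter i01 allpairs_f ?mem_enum.
  by apply/mapP; exists J'.
rewrite g_mu; apply/dvdn_gcdlP => x /flatten_mapP[[i0 i1]].
rewrite mem_filter => /andP[/= i01 _] /mapP[J J_in ->].
exact/gP/Jset_admissible.
Qed.

Lemma gcdl_Mset_dvd_mu r n l d : (forall i, (i <= r)%N -> (1 <= n i)%N) ->
  (gcdl (Mset r n l d EE) %| `|mu_hat r n l d|)%N.
Proof.
move=> n_gt0; have /Mset_dvdP gM := dvdnn (gcdl (Mset r n l d EE)).
have := gM (fun c => inl (c, n c)); rewrite tagmx_v det_vmx_of_last abszMsign; apply=> c.
by rewrite mem_col_tags_v leqnn andbT (n_gt0 _ (ltn_ord c)).
Qed.

Lemma gcdl_Mset_dvd_nu r n l d (i0 i1 : 'I_r.+1) J :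
  (forall i, (i <= r)%N -> (1 <= n i)%N) -> i0 != i1 -> admissible r n i1 J ->
  (gcdl (Mset r n l d EE) %|
     `|(nu_hat n l d i0 (J i0) * \prod_(i | (i != i0) && (i != i1)) l i (J i))%R|)%N.
Proof.
move=> n_gt0 i01 J_ok; have /Mset_dvdP gM := dvdnn (gcdl (Mset r n l d EE)).
have := gM (fun c => inl (if c == i1 then i0 else c, if c == i1 then n i0 else J c)).
rewrite tagmx_v det_vmx_of_nu // abszMsign; apply=> c; rewrite mem_col_tags_v.
by case: eqP => [_ | /eqP c1]; [rewrite leqnn andbT (n_gt0 _ (ltn_ord i0)) | apply: J_ok].
Qed.

Lemma gcdl_Mset_dvd_prod r n l d t i1 J : t <> EE -> admissible r n i1 J ->
  (gcdl (Mset r n l d t) %| `|(\prod_(i | i != i1) l i (J i))%R|)%N.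
Proof.
move=> tE J_ok; have [b b_in] := col_tag_u r n tE.
have /Mset_dvdP gM := dvdnn (gcdl (Mset r n l d t)).
have := gM (fun c => if c == i1 then inr b else inl (c, J c)).
rewrite tagmx_vmx (det_vmx_lam0 _ _ _ i1) /= ?eqxx //.
rewrite (@ecof_ext _ _ id) ?ecof_id; last by move=> c /[!inE] /negbTE->.
rewrite (eq_bigr (fun c : 'I_r.+1 => l c (J c))) => [|c /negbTE-> //].
rewrite mulrC abszMsign abszM; case: b b_in => b_in; rewrite mul1n; apply=> c;
  by case: eqP => [// | /eqP c1]; rewrite mem_col_tags_v J_ok.
Qed.

Lemma gcdl_Mset_dvd_Mprime r n l d t : (forall i, (i <= r)%N -> (1 <= n i)%N) ->
  (gcdl (Mset r n l d t) %| gcdl (Mprime r n l d t))%N.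
Proof.
move=> n_gt0; have [-> | tE] : t = EE \/ t <> EE by case: t; [left | right..].
  apply/Mprime_dvdP_EE; split=> [|i0 i1 J]; first exact: gcdl_Mset_dvd_mu.
  exact: gcdl_Mset_dvd_nu.
by apply/Mprime_dvdP_u => // i1 J; apply: gcdl_Mset_dvd_prod.
Qed.

Lemma gcdl_Mprime_dvd_det_EE r n l d T : (1 <= r)%N ->
  (forall i, (i <= r)%N -> (1 <= n i)%N) ->
  (forall i j, (i <= r)%N -> (1 <= j <= n i)%N -> coprimez (l i j) (d i j)) ->
  (forall c, T c \in col_tags r n EE) ->
  (gcdl (Mprime r n l d EE) %| `|\det (tagmx r l d T)|)%N.
Proof.
move=> r_gt0 n_gt0 coprime_ld T_in.
have [g_mu g_nu] := (Mprime_dvdP_EE r n l d _).1 (dvdnn (gcdl (Mprime r n l d EE))).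
pose a c := tag_a r (T c); pose j c := tag_j r (T c).
have T_v c : T c = inl (a c, j c).
  by have := T_in c; rewrite /a /j; case: (T c) => [[] // | b /mem_col_tags_u].
have -> : tagmx r l d T = vmx_of l d a j.
  by rewrite -tagmx_v; apply/matrixP => k c; rewrite !mxE T_v.
rewrite dvdn_absz; apply: (dvd_det_vmx_of r_gt0 n_gt0 coprime_ld) => [||c].
- by rewrite -dvdn_absz.
- by move=> i0 i1 J i01 J_ok; rewrite -dvdn_absz; apply: g_nu.
- by have := T_in c; rewrite T_v mem_col_tags_v.
Qed.

Lemma gcdl_Mprime_dvd_det_u r n l d t T :
  t <> EE -> (forall c, T c \in col_tags r n t) ->
  (gcdl (Mprime r n l d t) %| `|\det (tagmx r l d T)|)%N.
Proof.
move=> tE T_in; have g_prod := (Mprime_dvdP_u r n l d t _ tE).1 (dvdnn _).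
have {}g_prod i1 J : admissible r n i1 J ->
    ((gcdl (Mprime r n l d t))%:Z %| \prod_(i | i != i1) l i (J i))%Z.
  by move=> J_ok; rewrite -dvdn_absz; apply: g_prod.
rewrite tagmx_vmx dvdn_absz.
apply: (dvd_det_vmx_mixed g_prod _ _ _ (fun c => tag_j r (T c))) => c.
by have := T_in c; case: (T c) => [[i j] | b] /=; [rewrite mem_col_tags_v; right | left].
Qed.

Lemma gcdl_Mprime_dvd_Mset r n l d t : (1 <= r)%N ->
  (forall i, (i <= r)%N -> (1 <= n i)%N) ->
  (forall i j, (i <= r)%N -> (1 <= j <= n i)%N -> coprimez (l i j) (d i j)) ->
  (gcdl (Mprime r n l d t) %| gcdl (Mset r n l d t))%N.
Proof.
move=> r_gt0 n_gt0 coprime_ld; apply/Mset_dvdP => T.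
have [-> | tE] : t = EE \/ t <> EE by case: t; [left | right..].
  exact: gcdl_Mprime_dvd_det_EE.
exact: gcdl_Mprime_dvd_det_u.
Qed.

Theorem proposition4p11 (r : nat) (n : nat -> nat) (l d : nat -> nat -> int)
  (t : ptype)
  (hr : (1 <= r)%N)
  (hn : forall i, (i <= r)%N -> (1 <= n i)%N)
  (hl : forall i j, (i <= r)%N -> (1 <= j <= n i)%N -> 1 <= l i j)
  (hcop : forall i j, (i <= r)%N -> (1 <= j <= n i)%N -> coprimez (l i j) (d i j))
  (hslope : forall i j, (i <= r)%N -> (1 <= j)%N -> (j < n i)%N ->
     (d i j.+1)%:~R / (l i j.+1)%:~R < (d i j)%:~R / (l i j)%:~R :> rat)
  (hdef : is_defining r n l d t) :
  gcdl (Mset r n l d t) = gcdl (Mprime r n l d t).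
Proof.
by apply/eqP; rewrite eqn_dvd gcdl_Mset_dvd_Mprime // gcdl_Mprime_dvd_Mset.
Qed.
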